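(* For every integer $k\ge 3$ there exist a finite connected graph $G$ and an isometric subgraph $H$ of $G$ such that $c(H)=1$, but $H$ is not $k$-guardable in $G$ (i.e., $k$ cops cannot guard $H$ in $G$).
   Context: All graphs are finite, simple and connected. A subgraph $H$ of $G$ is isometric if $d_H(x,y)=d_G(x,y)$ for all $x,y\in V(H)$. Cops and robber game on $G$: the cops first choose starting vertices, then the robber; then they alternate turns, each player moving each piece to an adjacent vertex or staying; a capture occurs when a cop occupies the robber's vertex. The cop number $c(H)$ is the minimum number of cops that can guarantee capture on $H$. For an isometric subgraph $H$ of $G$ and $k\ge1$, $H$ is $k$-guardable in $G$ if $k$ cops have a strategy such that after finitely many moves the $k$ cops are on vertices of $H$ and from then on always stay in $H$, and whenever the robber enters $H$ he is captured by one of these cops in the next turn. *)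

From mathcomp Require Import all_boot.
Set Implicit Arguments. Unset Strict Implicit. Unset Printing Implicit Defensive.

Definition simple_graph (T : finType) (e : rel T) : Prop :=
  symmetric e /\ irreflexive e.

Definition connected_graph (T : finType) (e : rel T) : Prop :=
  forall x y : T, connect e x y.

Definition dist_le (T : finType) (e : rel T) (n : nat) (x y : T) : Prop :=
  exists p : seq T, [/\ path e x p, last x p = y & size (p) <= n].

Definition is_subgraph (T : finType) (e : rel T) (S : {set T}) (eH : rel T) : Prop :=
  forall x y, eH x y -> [/\ x \in S, y \in S & e x y].

(* H isometric in G: d_H(x,y) = d_G(x,y) for all x y in V(H)
   (equality of distances expressed as equality of all sublevel sets) *)
Definition isometric (T : finType) (e : rel T) (S : {set T}) (eH : rel T) : Prop :=
  is_subgraph e S eH /\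
  forall x y, x \in S -> y \in S -> forall n, dist_le eH n x y <-> dist_le e n x y.

Definition step (V : finType) (e : rel V) (x y : V) : bool := (x == y) || e x y.

Definition robber_walk (V : finType) (A : {set V}) (e : rel V) (R : nat -> V) : Prop :=
  R 0 \in A /\ forall t, R t.+1 \in A /\ step e (R t) (R t.+1).

(* Cops position in round t (t = 0: initial placement,
   chosen before the robber; round t+1: cops' move after robber's t-th position). *)
Definition cpos (V : finType) (k : nat) (sigma : seq V -> 'I_k -> V)
  (R : nat -> V) (t : nat) : 'I_k -> V := sigma (mkseq R t).

Definition legal_cops (V : finType) (A : {set V}) (e : rel V) (k : nat)
  (sigma : seq V -> 'I_k -> V) (R : nat -> V) : Prop :=
  forall t (j : 'I_k), cpos sigma R t j \in A /\
                       step e (cpos sigma R t j) (cpos sigma R t.+1 j).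

(* capture after the robber's t-th placement/move *)
Definition caught_at (V : finType) (k : nat) (sigma : seq V -> 'I_k -> V)
  (R : nat -> V) (t : nat) : Prop := exists j, cpos sigma R t j = R t.

(* capture after the cops' move following the robber's t-th position *)
Definition caught_after (V : finType) (k : nat) (sigma : seq V -> 'I_k -> V)
  (R : nat -> V) (t : nat) : Prop := exists j, cpos sigma R t.+1 j = R t.

Definition captured (V : finType) (k : nat) (sigma : seq V -> 'I_k -> V)
  (R : nat -> V) : Prop := exists t, caught_at sigma R t \/ caught_after sigma R t.

Definition cop_win (V : finType) (A : {set V}) (e : rel V) (k : nat) : Prop :=
  exists sigma : seq V -> 'I_k -> V,
    forall R, robber_walk A e R -> legal_cops A e sigma R /\ captured sigma R.

Definition cop_number_is (V : finType) (A : {set V}) (e : rel V) (n : nat) : Prop :=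
  cop_win A e n /\ forall m, m < n -> ~ cop_win A e m.

Definition not_caught_upto (V : finType) (k : nat) (sigma : seq V -> 'I_k -> V)
  (R : nat -> V) (i : nat) : Prop :=
  forall t, t <= i -> ~ caught_at sigma R t /\ (t < i -> ~ caught_after sigma R t).

Definition guardable (T : finType) (e : rel T) (S : {set T}) (k : nat) : Prop :=
  exists sigma : seq T -> 'I_k -> T,
    forall R, robber_walk [set: T] e R ->
      legal_cops [set: T] e sigma R /\
      exists N, forall i, N <= i -> not_caught_upto sigma R i ->
        (forall j, cpos sigma R i j \in S) /\
        (R i \in S -> exists j, cpos sigma R i.+1 j = R i).

From HB Require Import structures.
From mathcomp Require Import all_boot.
Set Implicit Arguments. Unset Strict Implicit. Unset Printing Implicit Defensive.

(* G is the bipartite double cover of the n-dimensional cube (outer and inner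
   copies of {0,1}^n, an outer x joined to an inner y when x and y differ in one
   coordinate) together with a clique on the pairs (a, b) of cube vertices, the
   pair (a, b) being joined to the inner vertices a and b.  H, induced on the
   inner vertices and the pairs, has diameter 2, so it is isometric, and one cop
   wins on H: from the clique, when the robber is at the inner vertex z, the cop
   moves to (z, z), which dominates the whole neighbourhood of z.
   In G, a cop dominates at most two of the n neighbours of a robber standing on
   the double cover: two distinct cube vertices have at most two common
   neighbours, and a pair is adjacent to only two inner vertices.  Hence for
   n > 2k the robber can walk on the double cover forever, always moving to a
   neighbour no cop can reach in one move; he is on the inner copy every other
   round and is never captured, so k cops cannot guard H. *)

Section Walks.
Variables (T : finType) (e : rel T).

Lemma connected_graph_from (c : T) :
  symmetric e -> (forall x, connect e x c) -> connected_graph e.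
Proof.
move=> e_sym to_c x y; apply: connect_trans (to_c x) _.
by rewrite (sym_connect_sym e_sym).
Qed.

Lemma dist_le_refl n x : dist_le e n x x.
Proof. by exists [::]. Qed.

Lemma dist_le_step n x y z : dist_le e n x y -> step e y z -> dist_le e n.+1 x z.
Proof.
case=> p [p_path p_last p_size] /orP [/eqP <- | e_yz].
  by exists p; split => //; apply: leqW.
exists (rcons p z); split; rewrite ?last_rcons ?size_rcons //.
by rewrite rcons_path p_path p_last.
Qed.

Lemma dist_le_two x y z : step e x y -> step e y z -> dist_le e 2 x z.
Proof. by move=> s_xy; apply: dist_le_step; apply: dist_le_step s_xy; apply: dist_le_refl. Qed.

Lemma dist_le_leq m n x y : m <= n -> dist_le e m x y -> dist_le e n x y.
Proof. by move=> le_mn [p [? ? p_size]]; exists p; split => //; apply: leq_trans le_mn. Qed.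

End Walks.

Section Subgraphs.
Variables (T : finType) (e : rel T).

Definition induced (S : {set T}) : rel T := fun x y => [&& x \in S, y \in S & e x y].

Lemma induced_sym (S : {set T}) : symmetric e -> symmetric (induced S).
Proof. by move=> e_sym x y; rewrite /induced e_sym andbCA. Qed.

Lemma induced_isometric (S : {set T}) :
  (forall x y, x \in S -> y \in S -> dist_le (induced S) 2 x y) ->
  isometric e S (induced S).
Proof.
move=> diam2; split=> [x y /and3P [] // | x y xS yS n]; split.
  case=> p [p_path p_last p_size]; exists p; split => //.
  by apply: sub_path p_path => u v /and3P [].
case=> -[|z [|z' p]] [/= p_path p_last p_size].
- by rewrite -p_last; apply: dist_le_refl.
- exists [:: z]; split => //=; rewrite -p_last in yS *.
  by rewrite /induced xS yS; case/andP: p_path => ->.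
- by apply: dist_le_leq (diam2 _ _ xS yS); apply: leq_trans p_size.
Qed.

End Subgraphs.

Section OneCop.
Variables (T : finType) (e : rel T).

Lemma no_cop_win0 (A : {set T}) x : x \in A -> ~ cop_win A e 0.
Proof.
move=> xA [sigma win].
have still : robber_walk A e (fun _ => x).
  by split=> // t; rewrite /step eqxx.
by have [_ [t [[[]] | [[]]]]] := win _ still.
Qed.

Lemma cop_number_one (A : {set T}) x :
  x \in A -> cop_win A e 1 -> cop_number_is A e 1.
Proof.
by move=> xA win; split=> // m; rewrite ltnS leqn0 => /eqP ->; apply: no_cop_win0 xA.
Qed.

Definition rule_strategy (c0 : T) (g : T -> T -> T) : seq T -> 'I_1 -> T :=
  fun s _ => foldl g c0 s.

Lemma cpos_rule_strategy0 c0 g R j : cpos (rule_strategy c0 g) R 0 j = c0.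
Proof. by []. Qed.

Lemma cpos_rule_strategyS c0 g R t j :
  cpos (rule_strategy c0 g) R t.+1 j = g (cpos (rule_strategy c0 g) R t j) (R t).
Proof. by rewrite /cpos mkseqS /rule_strategy foldl_rcons. Qed.

Lemma rule_strategy_legal (A : {set T}) c0 g R :
  c0 \in A -> (forall c r, c \in A -> r \in A -> g c r \in A /\ step e c (g c r)) ->
  robber_walk A e R -> legal_cops A e (rule_strategy c0 g) R.
Proof.
move=> c0A g_legal [R0A RA].
have RA' t : R t \in A by case: t => // t; case: (RA t).
have cA t j : cpos (rule_strategy c0 g) R t j \in A.
  elim: t => // t IH; rewrite cpos_rule_strategyS.
  by case: (g_legal _ _ IH (RA' t)).
move=> t j; split=> //; rewrite cpos_rule_strategyS.
by case: (g_legal _ _ (cA t j) (RA' t)).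
Qed.

End OneCop.

Lemma card_bigcup_le (I T : finType) (P : pred I) (A : I -> {set T}) :
  #|\bigcup_(i | P i) A i| <= \sum_(i | P i) #|A i|.
Proof.
apply: (big_ind2 (fun (X : {set T}) n => #|X| <= n)) => // [|X m Y p le_Xm le_Yp].
  by rewrite cards0.
exact: leq_trans (leq_card_setU X Y) (leq_add le_Xm le_Yp).
Qed.

Lemma exists_avoiding k m b (P : 'I_k -> {set 'I_m}) :
  (forall j, #|P j| <= b) -> b * k < m -> exists i, forall j, i \notin P j.
Proof.
move=> Pb kb_m.
have small : #|\bigcup_j P j| < #|'I_m|.
  rewrite card_ord; apply: leq_ltn_trans kb_m; apply: leq_trans (card_bigcup_le _ _) _.
  apply: (@leq_trans (\sum_(j < k) b)); first by apply: leq_sum => j _.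
  by rewrite sum_nat_const card_ord mulnC.
have /subsetPn [i _ not_bad] : ~~ ([set: 'I_m] \subset \bigcup_j P j).
  by apply: contraL small => /subset_leq_card; rewrite cardsT -leqNgt.
by exists i => j; apply: contra not_bad => iP; apply/bigcupP; exists j.
Qed.

Lemma card_preim_le (T T' : finType) (f : T -> T') (P : {pred T}) (A : {pred T'}) :
  injective f -> {subset P <= [preim f of A]} -> #|P| <= #|A|.
Proof.
move=> f_inj PA; apply: leq_trans (subset_leq_card (introT subsetP PA)) _.
by rewrite card_preim //; apply/subset_leq_card/subsetP => y /andP [].
Qed.

Section Escape.
Variables (T : finType) (e : rel T) (B : pred T) (m : nat) (nbr : T -> 'I_m -> T) (b0 : T).
Hypotheses (e_irr : irreflexive e) (b0B : B b0).
Hypothesis nbrB : forall r i, B r -> B (nbr r i).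
Hypothesis nbr_edge : forall r i, B r -> e r (nbr r i).
Hypothesis nbr_cover : forall r c, B r -> c != r -> #|[set i | step e c (nbr r i)]| <= 2.
Variable k : nat.
Hypothesis k_small : 2 * k < m.

(* Without a safe neighbour the robber stays put; by [escape_spec] this only
   happens when a cop stands on him. *)
Definition escape (C : 'I_k -> T) (r : T) : T :=
  if [pick i | [forall j, ~~ step e (C j) (nbr r i)]] is Some i then nbr r i else r.

Lemma escapeB C r : B r -> B (escape C r).
Proof. by move=> rB; rewrite /escape; case: pickP => [i _ | _]; rewrite ?nbrB. Qed.

Lemma escape_step C r : B r -> step e r (escape C r).
Proof.
move=> rB; rewrite /escape /step; case: pickP => [i _ | _]; last by rewrite eqxx.
by rewrite nbr_edge ?orbT.
Qed.

Lemma escape_spec C r : B r -> (forall j, C j != r) ->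
  exists i, escape C r = nbr r i /\ forall j, ~~ step e (C j) (nbr r i).
Proof.
move=> rB Cr.
have [i avoid] := @exists_avoiding k m 2 (fun j => [set i | step e (C j) (nbr r i)])
  (fun j => nbr_cover rB (Cr j)) k_small.
rewrite /escape; case: pickP => [i' /forallP safe | none]; first by exists i'.
by have /forallP [] := none i; move=> j; have := avoid j; rewrite inE.
Qed.

Definition free_spot (C : 'I_k -> T) : T :=
  if [pick i | [forall j, C j != nbr b0 i]] is Some i then nbr b0 i else b0.

Lemma free_spot_spec C : B (free_spot C) /\ forall j, C j != free_spot C.
Proof.
have hit_le2 j : #|[set i | C j == nbr b0 i]| <= 2.
  have [-> | Cb0] := eqVneq (C j) b0.
    rewrite (_ : [set i | _] = set0) ?cards0 //; apply/setP => i; rewrite !inE.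
    by apply/negbTE/eqP => b0i; have := nbr_edge i b0B; rewrite -b0i e_irr.
  apply: leq_trans (nbr_cover b0B Cb0); apply/subset_leq_card/subsetP => i.
  by rewrite !inE /step => ->.
have [i avoid] := @exists_avoiding k m 2 _ hit_le2 k_small.
rewrite /free_spot; case: pickP => [i' /forallP safe | none]; first by split; rewrite ?nbrB.
by have /forallP [] := none i; move=> j; have := avoid j; rewrite inE.
Qed.

Section Robber.
Variable sigma : seq T -> 'I_k -> T.

(* The robber must start outside the closed neighbourhoods of the cops, which
   move right after his placement: he escapes from a cop-free vertex. *)
Definition robber_next (s : seq T) : T :=
  if s is [::] then escape (sigma [::]) (free_spot (sigma [::]))
  else escape (sigma s) (last b0 s).

Fixpoint robber_history (t : nat) : seq T :=
  if t is t'.+1 then rcons (robber_history t') (robber_next (robber_history t')) else [::].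

Definition robber (t : nat) : T := robber_next (robber_history t).

Lemma cpos_robber t : cpos sigma robber t = sigma (robber_history t).
Proof. by rewrite /cpos; congr sigma; elim: t => // t IH; rewrite mkseqS IH. Qed.

Lemma robberS t : robber t.+1 = escape (sigma (robber_history t.+1)) (robber t).
Proof.
have next_rcons s x : robber_next (rcons s x) = escape (sigma (rcons s x)) x.
  by case: s => [|y s] /=; rewrite ?last_rcons.
by rewrite /robber /= next_rcons.
Qed.

Lemma robberB t : B (robber t).
Proof.
elim: t => [|t IH]; last by rewrite robberS; apply: escapeB.
by apply: escapeB; case: (free_spot_spec (sigma [::])).
Qed.

Lemma robber_walk_robber : robber_walk [set: T] e robber.
Proof.
split=> [|t]; rewrite ?inE //; split=> //.
by rewrite robberS; apply/escape_step/robberB.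
Qed.

Hypothesis legal : legal_cops [set: T] e sigma robber.

Let safe_at t := forall j, ~~ step e (cpos sigma robber t j) (robber t).

Lemma cops_miss_of_safe t : safe_at t -> forall j, cpos sigma robber t.+1 j != robber t.
Proof.
move=> safe j; apply: contraNneq (safe j) => <-.
by case: (legal t j).
Qed.

Lemma robber_safe t : safe_at t.
Proof.
elim: t => [|t IH] j.
  rewrite cpos_robber /robber /=; have [spotB spot_free] := free_spot_spec (sigma [::]).
  by have [i [-> safe]] := escape_spec spotB spot_free.
have miss := cops_miss_of_safe IH; rewrite cpos_robber in miss *.
by rewrite robberS; have [i [-> safe]] := escape_spec (robberB t) miss.
Qed.

Lemma cops_miss t j : cpos sigma robber t.+1 j != robber t.
Proof. exact/cops_miss_of_safe/robber_safe. Qed.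

Lemma robber_moves t : exists i, robber t.+1 = nbr (robber t) i.
Proof.
have miss := @cops_miss t; rewrite cpos_robber in miss.
by rewrite robberS; have [i [-> _]] := escape_spec (robberB t) miss; exists i.
Qed.

End Robber.

Lemma escape_not_guardable (S : {set T}) :
  (forall r i, B r -> (nbr r i \in S) = (r \notin S)) -> ~ guardable e S k.
Proof.
move=> nbr_side [sigma guard].
have [legal [N guardN]] := guard _ (robber_walk_robber sigma).
have uncaught i : not_caught_upto sigma (robber sigma) i.
  move=> t _; split=> [[j hit] | _ [j hit]].
    by have := robber_safe legal t j; rewrite hit /step eqxx.
  by have := cops_miss legal t j; rewrite hit eqxx.
have [i [Ni iS]] : exists i, N <= i /\ robber sigma i \in S.
  have [NS | NnS] := boolP (robber sigma N \in S); first by exists N.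
  exists N.+1; have [j ->] := robber_moves legal N.
  by rewrite leqnSn nbr_side // robberB.
have [j hit] := (guardN i Ni (uncaught i)).2 iS.
by have := cops_miss legal i j; rewrite hit eqxx.
Qed.

End Escape.

Section Construction.
Variable n : nat.

Definition cube := {ffun 'I_n -> bool}.

Definition flip (x : cube) (i : 'I_n) : cube := [ffun l => x l (+) (l == i)].

Definition cube_adj (x y : cube) : bool := [exists i, y == flip x i].

Lemma flipK x i : flip (flip x i) i = x.
Proof. by apply/ffunP => l; rewrite !ffunE addbK. Qed.

Lemma flip_inj x : injective (flip x).
Proof.
move=> i j /ffunP /(_ i); rewrite !ffunE eqxx.
by move/addbI => /esym /eqP.
Qed.

Lemma cube_adjC : symmetric cube_adj.
Proof. by move=> x y; apply/existsP/existsP => -[i /eqP ->]; exists i; rewrite flipK. Qed.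

Lemma cube_adj_irr : irreflexive cube_adj.
Proof.
move=> x; apply/negbTE/existsP => -[i /eqP /(congr1 (fun y : cube => y i))].
by rewrite ffunE eqxx addbT; case: (x i).
Qed.

Lemma flip_eq_diff x z i j : x != z -> flip x i = flip z j ->
  [set l | x l != z l] = [set i; j].
Proof.
move=> xz /ffunP eq_l.
have ij : i != j.
  apply: contraNneq xz => ij; apply/eqP/ffunP => l.
  by move: (eq_l l); rewrite !ffunE ij; apply: addIb.
apply/setP => l; rewrite !inE; move: (eq_l l); rewrite !ffunE.
have [-> | _] := eqVneq l i; first by rewrite (negbTE ij); case: (x i); case: (z i).
have [-> | _] := eqVneq l j; first by case: (x j); case: (z j).
by rewrite !addbF => ->; rewrite eqxx.
Qed.

Lemma card_common_nbrs x z : x != z -> #|[set i | cube_adj z (flip x i)]| <= 2.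
Proof.
move=> xz; case: (set_0Vmem [set i | cube_adj z (flip x i)]) => [-> | [i0]].
  by rewrite cards0.
rewrite inE => /existsP [j0 /eqP /(flip_eq_diff xz) diff0].
apply: leq_trans (_ : #|[set l | x l != z l]| <= 2); last by rewrite diff0 cards2 ltnS leq_b1.
apply/subset_leq_card/subsetP => i; rewrite inE => /existsP [j /eqP /(flip_eq_diff xz) ->].
by rewrite !inE eqxx.
Qed.

Inductive vert := Outer of cube | Inner of cube | Pair of cube & cube.

Definition vert_code (v : vert) : (cube + cube) + (cube * cube) :=
  match v with Outer x => inl (inl x) | Inner x => inl (inr x) | Pair a b => inr (a, b) end.

Definition vert_decode (c : (cube + cube) + (cube * cube)) : vert :=
  match c with inl (inl x) => Outer x | inl (inr x) => Inner x | inr (a, b) => Pair a b end.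

Lemma vert_codeK : cancel vert_code vert_decode. Proof. by case. Qed.

HB.instance Definition _ := Finite.copy vert (can_type vert_codeK).

Definition edge (u v : vert) : bool :=
  match u, v with
  | Outer x, Inner y | Inner y, Outer x => cube_adj x y
  | Inner y, Pair a b | Pair a b, Inner y => (y == a) || (y == b)
  | Pair a b, Pair c d => (a, b) != (c, d)
  | _, _ => false
  end.

Definition core : {set vert} := [set v | if v is Outer _ then false else true].

Definition core_edge : rel vert := induced edge core.

Lemma edge_sym : symmetric edge.
Proof. by do 2![case=> [?|?|? ?]] => //=; rewrite eq_sym. Qed.

Lemma edge_irr : irreflexive edge.
Proof. by case=> [x|x|a b] //=; rewrite ?cube_adj_irr ?eqxx. Qed.

Definition hub : vert := Pair [ffun=> false] [ffun=> false].

Lemma connect_hub (i0 : 'I_n) v : connect edge v hub.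
Proof.
have pair_hub a b : connect edge (Pair a b) hub.
  have [-> | ne] := eqVneq (Pair a b) hub; first exact: connect0.
  exact: connect1.
have inner_hub y : connect edge (Inner y) hub.
  by apply: connect_trans (pair_hub y y); apply: connect1; rewrite /= eqxx.
case: v => [x|y|a b] //; apply: connect_trans (inner_hub (flip x i0)).
by apply: connect1; apply/existsP; exists i0.
Qed.

Lemma step_pairs a b c d : step core_edge (Pair a b) (Pair c d).
Proof. by rewrite /step /core_edge /induced !inE /=; exact: orbN. Qed.

Lemma step_inner_pair y a b : (y == a) || (y == b) -> step core_edge (Inner y) (Pair a b).
Proof. by rewrite /step /core_edge /induced !inE /= => ->. Qed.

Lemma step_pair_inner y a b : (y == a) || (y == b) -> step core_edge (Pair a b) (Inner y).
Proof. by rewrite /step /core_edge /induced !inE /= => ->. Qed.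

Lemma core_dist_le2 u v : u \in core -> v \in core -> dist_le core_edge 2 u v.
Proof.
rewrite !inE; case: u => [//|a|a b] _; case: v => [//|c|c d] _.
- apply: (dist_le_two (y := Pair a c)).
    by apply: step_inner_pair; rewrite eqxx.
  by apply: step_pair_inner; rewrite eqxx orbT.
- apply: (dist_le_two (y := Pair a a)) (step_pairs _ _ _ _).
  by apply: step_inner_pair; rewrite eqxx.
- apply: (dist_le_two (y := Pair c c)) (step_pairs _ _ _ _) _.
  by apply: step_pair_inner; rewrite eqxx.
- by apply: (dist_le_two (y := Pair c d)); apply: step_pairs.
Qed.

Definition chase (c r : vert) : vert :=
  if step core_edge c r then r else
  match c, r with
  | Inner y, _ => Pair y y
  | Pair _ _, Inner z => Pair z z
  | _, _ => c
  end.

Lemma chase_legal c r :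
  c \in core -> r \in core -> chase c r \in core /\ step core_edge c (chase c r).
Proof.
rewrite /chase; case: ifP => // _; rewrite !inE.
case: c => [//|y|a b] _ rS; first by split=> //; apply: step_inner_pair; rewrite eqxx.
by case: r rS => [//|z|a' b'] _; split; rewrite ?inE ?step_pairs ?/step ?eqxx.
Qed.

Lemma core_cop_win : cop_win core core_edge 1.
Proof.
pose sigma := rule_strategy hub chase.
exists sigma => R walk; split.
  by apply: rule_strategy_legal; rewrite ?inE //; apply: chase_legal.
have catch t : step core_edge (cpos sigma R t ord0) (R t) -> captured sigma R.
  by move=> st; exists t; right; exists ord0; rewrite cpos_rule_strategyS /chase st.
have [R0S RS] := walk.
have [|hub_far] := boolP (step core_edge hub (R 0)); first exact: (catch 0).
have [z R0z] : exists z, R 0 = Inner z.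
  by move: R0S hub_far; case: (R 0) => [x|z|a b]; rewrite ?inE ?step_pairs //; exists z.
have cop1 : cpos sigma R 1 ord0 = Pair z z.
  by rewrite cpos_rule_strategyS cpos_rule_strategy0 /chase (negbTE hub_far) R0z.
apply: (catch 1); rewrite cop1.
have [R1S] := RS 0; rewrite R0z.
move: (R 1) R1S => v; rewrite inE.
case: v => [//|y|a b] _; last by rewrite step_pairs.
by case/orP => [/eqP [<-] | /and3P []] //; apply: step_pair_inner; rewrite eqxx.
Qed.

Lemma core_cop_number : cop_number_is core core_edge 1.
Proof. by apply: (@cop_number_one _ _ _ hub); rewrite ?inE //; apply: core_cop_win. Qed.

Definition cross (r : vert) (i : 'I_n) : vert :=
  match r with Outer x => Inner (flip x i) | Inner x => Outer (flip x i) | Pair _ _ => r end.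

Definition on_cover (v : vert) : bool := if v is Pair _ _ then false else true.

Lemma cross_on_cover r i : on_cover r -> on_cover (cross r i).
Proof. by case: r. Qed.

Lemma cross_edge r i : on_cover r -> edge r (cross r i).
Proof. by case: r => [x|x|//] _ /=; apply/existsP; exists i; rewrite ?flipK. Qed.

Lemma cross_core r i : on_cover r -> (cross r i \in core) = (r \notin core).
Proof. by case: r => [x|x|//] _; rewrite !inE. Qed.

Lemma cross_cover_le2 r c : on_cover r -> c != r -> #|[set i | step edge c (cross r i)]| <= 2.
Proof.
have preim_le x (A : {set cube}) : #|A| <= 2 ->
  {subset [set i | step edge c (cross r i)] <= [preim flip x of A]} ->
  #|[set i | step edge c (cross r i)]| <= 2.
  by move=> A2 sub; apply: leq_trans (card_preim_le (@flip_inj x) sub) A2.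
case: r preim_le => [x|x|//] preim_le _; case: c preim_le => [z|z|a b] preim_le ne.
- apply: leq_trans (card_common_nbrs (x := x) (z := z) _); last by apply: contraNneq ne => ->.
  by apply/subset_leq_card/subsetP => i; rewrite !inE /step /=.
- apply: (preim_le x [set z]); first by rewrite cards1.
  by move=> i; rewrite !inE /step /= orbF => /eqP [->].
- apply: (preim_le x [set a; b]); first by rewrite cards2 ltnS leq_b1.
  by move=> i; rewrite !inE /step /=.
- apply: (preim_le x [set z]); first by rewrite cards1.
  by move=> i; rewrite !inE /step /= orbF => /eqP [->].
- apply: leq_trans (card_common_nbrs (x := x) (z := z) _); last by apply: contraNneq ne => ->.
  by apply/subset_leq_card/subsetP => i; rewrite !inE /step /= cube_adjC.
- by apply: (preim_le x set0); rewrite ?cards0 // => i; rewrite !inE /step.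
Qed.

Lemma core_not_guardable k : 2 * k < n -> ~ guardable edge core k.
Proof.
move=> k_small; apply: (@escape_not_guardable _ _ on_cover _ cross (Outer [ffun=> false])) => //.
- exact: edge_irr.
- exact: cross_on_cover.
- exact: cross_edge.
- exact: cross_cover_le2.
- exact: cross_core.
Qed.

End Construction.

Theorem theorem3p1 : forall k : nat, 3 <= k ->
  exists (T : finType) (e : rel T) (S : {set T}) (eH : rel T),
    simple_graph e /\ connected_graph e /\ symmetric eH /\ isometric e S eH /\
    cop_number_is S eH 1 /\ ~ guardable e S k.
Proof.
move=> k _; pose n := (2 * k).+1.
exists (vert n), (@edge n), (@core n), (@core_edge n).
split; first by split; [apply: edge_sym | apply: edge_irr].
split.
  by apply: (connected_graph_from (c := @hub n)); [apply: edge_sym | apply: connect_hub ord0].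
split; first by apply/induced_sym/edge_sym.
split; first by apply/induced_isometric/core_dist_le2.
split; first exact: core_cop_number.
exact: core_not_guardable.
Qed.
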